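(* Consider the fully discrete, second-order (BDF2) finite element scheme described in the context, and let $n\ge 1$. Suppose the quantities at steps $n$ and $n-1$ are given, the quantities at step $n+1$ are computed by the scheme, and $\bar E_{SPNP}^{n+1}+B>0$. Then: (1) (Positivity) if $c_{ih}^{n}>0$ on $\Omega$ for every $i$, then $c_{ih}^{n+1}>0$ on $\Omega$ for every $i$; (2) (Mass conservation) $(c_{ih}^{n+1},1)=(c_{ih}^{n},1)$ for every $i$; (3) (Energy dissipation) $$\frac{E_h^{n+1}-E_h^{n}}{\Delta t}\le -\frac{1}{Re}\int_\Omega 2\mu_{ph}^{*}\,\mathbb{D}\tilde{\mathbf u}_h^{n+1}:\mathbb{D}\tilde{\mathbf u}_h^{n+1}\,d\mathbf x-|\xi^{n+1}|^2\frac{Co}{Pe}\sum_{i=1}^N\big\|\sqrt{c_{ih}^{n+1}}\,\nabla \bar g_{ih}^{n+1}\big\|^2,$$ where for $m\ge 1$ $$E_h^{m}=\tfrac12\Big(\tfrac12\|\mathbf u_h^{m}\|^2+\tfrac12\|2\mathbf u_h^{m}-\mathbf u_h^{m-1}\|^2\Big)+\frac{\Delta t^2}{3}\|\nabla p_h^{m}\|^2+\tfrac12\big(|r^{m}|^2+|2r^{m}-r^{m-1}|^2\big).$$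
   Context: Setting. $\Omega\subset\mathbb R^2$ is a rectangular domain, $\mathcal T_h$ a uniform triangulation of $\bar\Omega$ with mesh size $0<h<1$. $(\cdot,\cdot)$ and $\|\cdot\|$ denote the $L^2(\Omega)$ inner product and norm; $L^2_0(\Omega)$ is the mean-zero subspace of $L^2(\Omega)$. Finite element spaces: $\mathbf X_h=\{\mathbf v_h\in H^1_0(\Omega)^2\cap C^0(\bar\Omega)^2:\mathbf v_h|_K\in P_{l_1}(K)^2\ \forall K\}$, $M_h=\{q_h\in L^2_0(\Omega)\cap C^0(\bar\Omega): q_h|_K\in P_{l_2}(K)\}$, $Q_h=\{\varphi_h\in H^1(\Omega)\cap C^0(\bar\Omega):\varphi_h|_K\in P_{l_3}(K)\}$, $S_h=Q_h\cap L^2_0(\Omega)$; $(\mathbf X_h,M_h)$ satisfies the discrete inf-sup condition. $\mathbb D\mathbf u=\frac12(\nabla\mathbf u+\nabla\mathbf u^T)$. Parameters: $N$ ion species $i=1,\dots,N$ with valences $z_i$; a positive definite matrix $W=(\omega_{ij})$ with nonnegative entries; positive constants $Re,Co,Pe,\lambda,\lambda_1,k$, $\mu_0>\mu_\infty>0$; a constant $B>0$; time step $\Delta t>0$. Data at steps $n,n-1$: $\mathbf u_h^{n},\mathbf u_h^{n-1}\in\mathbf X_h$, $p_h^n\in M_h$, $\sigma_{ih}^n,\sigma_{ih}^{n-1}\in Q_h$, concentrations $c_{ih}^n,c_{ih}^{n-1}$, potentials $V_h^n,V_h^{n-1}$, scalars $r^n,r^{n-1}$, viscosities $\mu_{ph}^n,\mu_{ph}^{n-1}$.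 Extrapolations: $\mathbf u_h^*=2\mathbf u_h^n-\mathbf u_h^{n-1}$, $\sigma_{ih}^*=2\sigma_{ih}^n-\sigma_{ih}^{n-1}$, $c_{ih}^*=2c_{ih}^n-c_{ih}^{n-1}$, $V_h^*=2V_h^n-V_h^{n-1}$, $\mu_{ph}^*=2\mu_{ph}^n-\mu_{ph}^{n-1}$. Scheme (step $n\to n+1$): find $\sigma_{ih}^{n+1},\bar V_h^{n+1},V_h^{n+1},\tilde{\mathbf u}_h^{n+1},\mathbf u_h^{n+1},\psi_h^{n+1},p_h^{n+1},r^{n+1},\xi^{n+1}$ such that, for all test functions $\eta_{ih},\phi_h\in Q_h$, $\mathbf v_h\in\mathbf X_h$, $q_h\in M_h$: (a) $\big(\frac{3\sigma_{ih}^{n+1}-4\sigma_{ih}^n+\sigma_{ih}^{n-1}}{2\Delta t},\eta_{ih}\big)+(\mathbf u_h^*\cdot\nabla\sigma_{ih}^{n+1},\eta_{ih})+(\nabla\sigma_{ih}^{n+1},\nabla\eta_{ih})=\frac1{Pe}\Big((\nabla\sigma_{ih}^*\cdot\nabla\sigma_{ih}^{n+1},\eta_{ih})-z_i(\nabla V_h^*,\nabla\eta_{ih})+(z_i\nabla\sigma_{ih}^{n+1}\cdot\nabla V_h^*,\eta_{ih})+(\sum_j\omega_{ij}\nabla\sigma_{ih}^{n+1}\cdot\nabla\sigma_{jh}^*c_{jh}^*,\eta_{ih})-(\omega_{ij}\nabla\sigma_{jh}^*c_{jh}^*,\nabla\eta_{ih})-(\omega_{ii}\nabla\sigma_{ih}^{n+1}c_{ih}^*,\nabla\eta_{ih})\Big)$;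 (b) $\bar c_{ih}^{n+1}=\exp(\sigma_{ih}^{n+1})$ and $c_{ih}^{n+1}=\frac{(c_{ih}^n,1)}{(\bar c_{ih}^{n+1},1)}\bar c_{ih}^{n+1}$; (c) $\bar V_h^{n+1}\in S_h$ with $(\lambda\nabla\bar V_h^{n+1},\nabla\phi_h)=\sum_i(z_ic_{ih}^{n+1},\phi_h)$; (d) $\bar E_{SPNP}^{n+1}=\frac{\lambda Co}2\|\nabla\bar V_h^{n+1}\|^2+Co\sum_i(c_{ih}^{n+1},\log c_{ih}^{n+1}-1)+\frac{Co}2\sum_{i,j}\omega_{ij}(c_{ih}^{n+1},c_{jh}^{n+1})$ and $\bar g_{ih}^{n+1}=\log c_{ih}^{n+1}+z_i\bar V_h^{n+1}+\sum_j\omega_{ij}c_{jh}^{n+1}$; (e) $\tilde{\mathbf u}_h^{n+1}\in\mathbf X_h$ with $\big(\frac{3\tilde{\mathbf u}_h^{n+1}-4\mathbf u_h^n+\mathbf u_h^{n-1}}{2\Delta t},\mathbf v_h\big)+\xi^{n+1}((\mathbf u_h^*\cdot\nabla)\mathbf u_h^*,\mathbf v_h)+\frac1{Re}(2\mu_{ph}^*\mathbb D\tilde{\mathbf u}_h^{n+1},\mathbb D\mathbf v_h)+(\nabla p_h^n,\mathbf v_h)=-Co\,\xi^{n+1}(\sum_iz_ic_{ih}^{n+1}\nabla\bar V_h^{n+1},\mathbf v_h)$; (f) $\xi^{n+1}=r^{n+1}/\sqrt{\bar E_{SPNP}^{n+1}+B}$, $V_h^{n+1}=\xi^{n+1}\bar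 V_h^{n+1}$, and $\frac{3r^{n+1}-4r^n+r^{n-1}}{2\Delta t}=\frac{1}{2\sqrt{\bar E_{SPNP}^{n+1}+B}}\Big(-\frac{Co}{Pe}\xi^{n+1}\sum_i\|\sqrt{c_{ih}^{n+1}}\nabla\bar g_{ih}^{n+1}\|^2+Co(\sum_iz_ic_{ih}^{n+1}\tilde{\mathbf u}_h^{n+1},\nabla\bar V_h^{n+1})+((\mathbf u_h^*\cdot\nabla)\mathbf u_h^*,\tilde{\mathbf u}_h^{n+1})\Big)$; (g) $\psi_h^{n+1}\in M_h$ with $(\nabla\psi_h^{n+1},\nabla q_h)=\frac3{2\Delta t}(\tilde{\mathbf u}_h^{n+1},\nabla q_h)$, then $\mathbf u_h^{n+1}=\tilde{\mathbf u}_h^{n+1}-\frac{2\Delta t}3\nabla\psi_h^{n+1}$, $p_h^{n+1}=\psi_h^{n+1}+p_h^n$; (h) $\mu_{ph}^{n+1}=\mu_\infty+(\mu_0-\mu_\infty)\big(1+\lambda_1^2(2\mathbb D\mathbf u_h^{n+1}:\mathbb D\mathbf u_h^{n+1})\big)^{\frac{k-1}2}$. This scheme discretizes a Carreau-fluid Navier–Stokes system coupled with a steric Poisson–Nernst–Planck system, using $c_i=e^{\sigma_i}$ and the auxiliary variable $r=\sqrt{E_{SPNP}+B}$. *)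

From mathcomp Require Import all_boot all_order all_algebra.
From mathcomp Require Import all_classical all_reals all_analysis.
Set Implicit Arguments. Unset Strict Implicit. Unset Printing Implicit Defensive.
Import Order.TTheory GRing.Theory Num.Theory.
Import numFieldNormedType.Exports.
Local Open Scope classical_set_scope.
Local Open Scope ring_scope.

(* Geometry: the rectangle Omega = ]a1,b1[ x ]a2,b2[ and its uniform          *)
(* triangulation: M1 x M2 equal rectangular cells of size hx x hy, each cell  *)
(* cut by its diagonal from the lower-left to the upper-right corner.         *)
Record grid (R : realType) := Grid {
  ga1 : R; gb1 : R; ga2 : R; gb2 : R; gM1 : nat; gM2 : nat }.

Section FE.
Variable R : realType.
Implicit Types (G : grid R).

Definition grid_ok G := ga1 G < gb1 G /\ ga2 G < gb2 G /\ (0 < gM1 G)%N /\ (0 < gM2 G)%N.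

Definition hx G : R := (gb1 G - ga1 G) / (gM1 G)%:R.
Definition hy G : R := (gb2 G - ga2 G) / (gM2 G)%:R.
(* mesh size = diameter of every triangle of the uniform triangulation *)
Definition meshsize G : R := Num.sqrt (hx G ^+ 2 + hy G ^+ 2).

Definition Omega G : set (R * R) :=
  [set x | ga1 G < x.1 < gb1 G /\ ga2 G < x.2 < gb2 G].
Definition Omegac G : set (R * R) :=
  [set x | ga1 G <= x.1 <= gb1 G /\ ga2 G <= x.2 <= gb2 G].
Definition bdry G : set (R * R) := Omegac G `\` Omega G.

(* closed triangle number (i,j,b) of the triangulation, i < M1, j < M2;
   b = false : lower triangle, b = true : upper triangle of cell (i,j) *)
Definition tri G (i j : nat) (b : bool) : set (R * R) :=
  [set x | let s := (x.1 - (ga1 G + i%:R * hx G)) / hx G in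
           let t := (x.2 - (ga2 G + j%:R * hy G)) / hy G in
           if b then 0 <= s /\ s <= t /\ t <= 1 else 0 <= t /\ t <= s /\ s <= 1].

Definition triint G (i j : nat) (b : bool) : set (R * R) :=
  [set x | let s := (x.1 - (ga1 G + i%:R * hx G)) / hx G in
           let t := (x.2 - (ga2 G + j%:R * hy G)) / hy G in
           if b then 0 < s /\ s < t /\ t < 1 else 0 < t /\ t < s /\ s < 1].
(* Omega minus the (Lebesgue-null) union of the edges of the triangulation;
   integrals over Omega are taken over this set (same value), so that partial
   derivatives of piecewise smooth functions are genuine derivatives at every
   point of the integration domain. *)
Definition Omega_int G : set (R * R) :=
  [set x | exists (i j : nat) (b : bool), (i < gM1 G)%N /\ (j < gM2 G)%N /\ triint G i j b x].

Definition poly2 (l : nat) (P : nat -> nat -> R) (x : R * R) : R :=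
  \sum_(i < l.+1) \sum_(j < l.+1 | (i + j <= l)%N) P i j * x.1 ^+ i * x.2 ^+ j.

Definition FEfun G (l : nat) (f : R * R -> R) : Prop :=
  (forall (i j : nat) (b : bool), (i < gM1 G)%N -> (j < gM2 G)%N ->
     exists P, forall x, tri G i j b x -> f x = poly2 l P x)
  /\ {within Omegac G, continuous f}.

Definition lam2 := (@lebesgue_measure R \x @lebesgue_measure R)%E.

Definition ip G (f g : R * R -> R) : R := Rintegral lam2 (Omega_int G) (fun x => f x * g x).
Definition onef : R * R -> R := fun _ => 1.

Definition vfun := ((R * R -> R) * (R * R -> R))%type.
Definition ipv G (u v : vfun) : R := ip G u.1 v.1 + ip G u.2 v.2.

Definition dx (f : R * R -> R) (x : R * R) : R := derive1 (fun t => f (t, x.2)) x.1.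
Definition dy (f : R * R -> R) (x : R * R) : R := derive1 (fun t => f (x.1, t)) x.2.
Definition grad (f : R * R -> R) : vfun := (dx f, dy f).
Definition ipg G (f g : R * R -> R) : R := ipv G (grad f) (grad g).
Definition gdot (f g : R * R -> R) (x : R * R) : R := dx f x * dx g x + dy f x * dy g x.

Definition lin (a : R) (f : R * R -> R) (b : R) (g : R * R -> R) : R * R -> R :=
  fun x => a * f x + b * g x.
Definition vlin (a : R) (u : vfun) (b : R) (v : vfun) : vfun :=
  (lin a u.1 b v.1, lin a u.2 b v.2).

Definition divv (v : vfun) (x : R * R) : R := dx v.1 x + dy v.2 x.

(* D u : D v  with D u = (grad u + grad u^T)/2 *)
Definition Dsym (u : vfun) (x : R * R) : R := (dy u.1 x + dx u.2 x) / 2.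
Definition DD (u v : vfun) (x : R * R) : R :=
  dx u.1 x * dx v.1 x + 2 * (Dsym u x * Dsym v x) + dy u.2 x * dy v.2 x.
Definition visc G (mu : R * R -> R) (u v : vfun) : R := ip G (fun x => 2 * mu x) (DD u v).
Definition conv G (w v : vfun) : R :=
  ip G (fun x => w.1 x * dx w.1 x + w.2 x * dy w.1 x) v.1 +
  ip G (fun x => w.1 x * dx w.2 x + w.2 x * dy w.2 x) v.2.

Definition Xh G l1 (v : vfun) : Prop :=
  FEfun G l1 v.1 /\ FEfun G l1 v.2 /\ (forall x, bdry G x -> v.1 x = 0 /\ v.2 x = 0).
Definition Mh G l2 (q : R * R -> R) : Prop := FEfun G l2 q /\ ip G q onef = 0.
Definition Qh G l3 (f : R * R -> R) : Prop := FEfun G l3 f.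
Definition Sh G l3 (f : R * R -> R) : Prop := FEfun G l3 f /\ ip G f onef = 0.

Definition inf_sup G l1 l2 : Prop :=
  exists beta : R, 0 < beta /\
    forall q, Mh G l2 q -> 0 < ip G q q ->
      exists v, Xh G l1 v /\ 0 < ipg G v.1 v.1 + ipg G v.2 v.2 /\
        beta * Num.sqrt (ip G q q) * Num.sqrt (ipg G v.1 v.1 + ipg G v.2 v.2)
          <= ip G (divv v) q.

Definition posdef N (W : 'M[R]_N) : Prop :=
  forall v : 'rV[R]_N, v != 0 -> 0 < (v *m W *m v^T) 0 0.

Definition Espnp G N (lambda Co : R) (W : 'M[R]_N) (c : 'I_N -> R * R -> R)
    (Vb : R * R -> R) : R :=
  lambda * Co / 2 * ipg G Vb Vb
  + Co * \sum_(i < N) ip G (c i) (fun x => ln (c i x) - 1)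
  + Co / 2 * \sum_(i < N) \sum_(j < N) W i j * ip G (c i) (c j).

Definition gbar N (z : 'I_N -> int) (W : 'M[R]_N) (c : 'I_N -> R * R -> R)
    (Vb : R * R -> R) (i : 'I_N) : R * R -> R :=
  fun x => ln (c i x) + (z i)%:~R * Vb x + \sum_(j < N) W i j * c j x.

Definition dissip G N z W (c : 'I_N -> R * R -> R) Vb (i : 'I_N) : R :=
  ip G (fun x => Num.sqrt (c i x) * dx (gbar z W c Vb i) x)
       (fun x => Num.sqrt (c i x) * dx (gbar z W c Vb i) x)
  + ip G (fun x => Num.sqrt (c i x) * dy (gbar z W c Vb i) x)
         (fun x => Num.sqrt (c i x) * dy (gbar z W c Vb i) x).

Definition Eh G (dt : R) (um umm : vfun) (pm : R * R -> R) (rm rmm : R) : R :=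
  (1/2) * ((1/2) * ipv G um um + (1/2) * ipv G (vlin 2 um (-1) umm) (vlin 2 um (-1) umm))
  + dt ^+ 2 / 3 * ipg G pm pm
  + (1/2) * (rm ^+ 2 + (2 * rm - rmm) ^+ 2).

(* (a), for species i, tested with eta; sig1 = sigma_i^{n+1}, sn/sm = sigma^n,
   sigma^{n-1}; ustar, sstar, cstar, Vstar the extrapolations *)
Definition eq_a G N (Pe dt : R) (z : 'I_N -> int) (W : 'M[R]_N)
    (sig1 sn sm sstar cstar : 'I_N -> R * R -> R) (Vstar : R * R -> R)
    (ustar : vfun) (i : 'I_N) (eta : R * R -> R) : Prop :=
  ip G (fun x => (3 * sig1 i x - 4 * sn i x + sm i x) / (2 * dt)) eta
  + ip G (fun x => ustar.1 x * dx (sig1 i) x + ustar.2 x * dy (sig1 i) x) eta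
  + ipg G (sig1 i) eta
  = Pe^-1 * ( ip G (gdot (sstar i) (sig1 i)) eta
              - (z i)%:~R * ipg G Vstar eta
              + ip G (fun x => (z i)%:~R * gdot (sig1 i) Vstar x) eta
              + ip G (fun x => \sum_(j < N) W i j * gdot (sig1 i) (sstar j) x * cstar j x) eta
              - \sum_(j < N | j != i)
                  ipv G (fun x => W i j * dx (sstar j) x * cstar j x,
                         fun x => W i j * dy (sstar j) x * cstar j x) (grad eta)
              - ipv G (fun x => W i i * dx (sig1 i) x * cstar i x,
                       fun x => W i i * dy (sig1 i) x * cstar i x) (grad eta)).

Definition eq_e G N (Re Co dt xi : R) (z : 'I_N -> int) (ut un um ustar : vfun)
    (mustar pn Vb : R * R -> R) (c1 : 'I_N -> R * R -> R) (v : vfun) : Prop :=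
  ipv G (vlin (3 / (2 * dt)) ut (1 / (2 * dt)) (vlin (-4) un 1 um)) v
  + xi * conv G ustar v + Re^-1 * visc G mustar ut v + ipv G (grad pn) v
  = - Co * xi * ipv G (fun x => \sum_(i < N) (z i)%:~R * c1 i x * dx Vb x,
                       fun x => \sum_(i < N) (z i)%:~R * c1 i x * dy Vb x) v.

Definition eq_f G N (Co Pe dt B xi r1 rn rm : R) (z : 'I_N -> int) (W : 'M[R]_N)
    (c1 : 'I_N -> R * R -> R) (Vb : R * R -> R) (lambda : R) (ut ustar : vfun) : Prop :=
  let S := Num.sqrt (Espnp G lambda Co W c1 Vb + B) in
  (3 * r1 - 4 * rn + rm) / (2 * dt)
  = (2 * S)^-1 * ( - (Co / Pe) * xi * \sum_(i < N) dissip G z W c1 Vb i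
                   + Co * ipv G (fun x => \sum_(i < N) (z i)%:~R * c1 i x * ut.1 x,
                                 fun x => \sum_(i < N) (z i)%:~R * c1 i x * ut.2 x) (grad Vb)
                   + conv G ustar ut).

Definition carreau (mu0 muinf lambda1 k : R) (u : vfun) : R * R -> R :=
  fun x => muinf + (mu0 - muinf) * (1 + lambda1 ^+ 2 * (2 * DD u u x)) `^ ((k - 1) / 2).

(* velocities produced by the projection step: elements of X_h + grad M_h *)
Definition proj_vel G l1 l2 (u : vfun) : Prop :=
  exists w phi, Xh G l1 w /\ Mh G l2 phi /\ u = vlin 1 w 1 (grad phi).

End FE.
Arguments onef {R}.

From mathcomp Require Import all_boot all_order all_algebra.
From mathcomp Require Import all_classical all_reals all_analysis.
From mathcomp Require Import measurable_realfun ring lra zify.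
Import Order.TTheory GRing.Theory Num.Theory.
Import numFieldNormedType.Exports.
Local Open Scope classical_set_scope.
Local Open Scope ring_scope.
Set Implicit Arguments. Unset Strict Implicit. Unset Printing Implicit Defensive.

(* Positivity and mass conservation hold by construction: c^{n+1} is exp(sigma^{n+1})
   rescaled by the ratio of the masses (c^n, 1) and (exp sigma^{n+1}, 1), both of which are
   positive because their integrands are bounded below on a small square inside the first
   triangle.  For the energy, test the velocity equation with u~^{n+1}: the projection
   step gives (u^{n+1}, grad psi) = 0 and grad p^{n+1} = grad psi + grad p^n, and the BDF2
   identity
     2 (3a - 4b + c, a) = |a|^2 + |2a - b|^2 - |b|^2 - |2b - c|^2 + |a - 2b + c|^2,
   used for the velocity and for r, turns the time derivatives into differences of E_h
   plus nonnegative remainders.  Since xi = r / sqrt(E + B), multiplying the r-equation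
   by r^{n+1} reproduces the convection and electric coupling terms of the velocity
   equation with the opposite sign, so only the two dissipation terms survive.  All
   integrands are piecewise polynomials on the triangulation, or exponentials of them,
   hence bounded and measurable, which is what makes the L^2 products bilinear. *)

(** * Polynomial functions of two variables *)

Section PolynomialFunctions.
Variable R : realType.
Implicit Types f g : R * R -> R.

Inductive polyfun : (R * R -> R) -> Prop :=
  | polyfun_cst (a : R) : polyfun (fun=> a)
  | polyfun_fst : polyfun fst
  | polyfun_snd : polyfun snd
  | polyfunD f g : polyfun f -> polyfun g -> polyfun (fun x => f x + g x)
  | polyfunM f g : polyfun f -> polyfun g -> polyfun (fun x => f x * g x).

Lemma eq_polyfun f g : f =1 g -> polyfun f -> polyfun g.
Proof. by move=> /funext <-. Qed.

Lemma polyfun_swap f : polyfun f -> polyfun (fun x => f (x.2, x.1)).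
Proof.
elim=> [a| | |{}f g _ pf _ pg|{}f g _ pf _ pg].
- exact: polyfun_cst.
- exact: polyfun_snd.
- exact: polyfun_fst.
- exact: polyfunD.
- exact: polyfunM.
Qed.

Lemma polyfunX f m : polyfun f -> polyfun (fun x => f x ^+ m).
Proof.
move=> pf; elim: m => [|m IH]; first exact: polyfun_cst.
by apply: eq_polyfun (polyfunM pf IH) => x; rewrite exprS.
Qed.

Lemma polyfun_sum (I : Type) (s : seq I) (P : pred I) (F : I -> R * R -> R) :
  (forall i, polyfun (F i)) -> polyfun (fun x => \sum_(i <- s | P i) F i x).
Proof.
move=> pF; elim: s => [|a s IH].
  by apply: eq_polyfun (polyfun_cst 0) => x; rewrite big_nil.
case Pa: (P a).
- by apply: eq_polyfun (polyfunD (pF a) IH) => x; rewrite big_cons Pa.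
- by apply: eq_polyfun IH => x; rewrite big_cons Pa.
Qed.

Lemma polyfun_poly2 l (P : nat -> nat -> R) : polyfun (poly2 l P).
Proof.
apply: polyfun_sum => i; apply: polyfun_sum => j.
exact: polyfunM (polyfunM (polyfun_cst _) (polyfunX i polyfun_fst)) (polyfunX j polyfun_snd).
Qed.

Lemma measurable_polyfun f : polyfun f -> measurable_fun setT f.
Proof.
elim=> [a| | |{}f g _ mf _ mg|{}f g _ mf _ mg].
- exact: measurable_cst.
- exact: measurable_fst.
- exact: measurable_snd.
- exact: measurable_funD.
- exact: measurable_funM.
Qed.

Lemma measurable_polyfun_lt f g : polyfun f -> polyfun g -> measurable [set x | f x < g x].
Proof.
move=> pf pg; have := measurable_fun_ltr (measurable_polyfun pf) (measurable_polyfun pg).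
by move=> /(_ measurableT [set true] I); rewrite setTI.
Qed.

Lemma polyfun_bounded f K : polyfun f ->
  exists M, forall x, `|x.1| <= K -> `|x.2| <= K -> `|f x| <= M.
Proof.
elim=> [a| | |{}f g _ [Mf bf] _ [Mg bg]|{}f g _ [Mf bf] _ [Mg bg]].
- by exists `|a|.
- by exists K => x.
- by exists K => x.
- exists (Mf + Mg) => x x1 x2.
  by rewrite (le_trans (ler_normD _ _)) // lerD ?bf ?bg.
- exists (Mf * Mg) => x x1 x2.
  by rewrite normrM ler_pM ?bf ?bg.
Qed.

Lemma polyfun_derive_fst f : polyfun f ->
  exists2 g, polyfun g & forall x, is_derive x.1 (1 : R) (fun t => f (t, x.2)) (g x).
Proof.
elim=> [a| | |{}f g _ [f' pf' df] _ [g' pg' dg]|{}f g pf [f' pf' df] pg [g' pg' dg]].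
- by exists (fun=> 0); [exact: polyfun_cst|move=> x; exact: is_derive_cst].
- by exists (fun=> 1); [exact: polyfun_cst|move=> x; exact: is_derive_id].
- by exists (fun=> 0); [exact: polyfun_cst|move=> x; exact: is_derive_cst].
- exists (fun x => f' x + g' x); first exact: polyfunD.
  by move=> x; exact: is_deriveD.
- exists (fun x => f x * g' x + g x * f' x).
    exact: polyfunD (polyfunM pf pg') (polyfunM pg pf').
  by move=> [x1 x2]; exact: (is_deriveM (df (x1, x2)) (dg (x1, x2))).
Qed.

Lemma polyfun_derive_snd f : polyfun f ->
  exists2 g, polyfun g & forall x, is_derive x.2 (1 : R) (fun t => f (x.1, t)) (g x).
Proof.
move=> /polyfun_swap /polyfun_derive_fst [g pg dg].
by exists (fun x => g (x.2, x.1)); [exact: polyfun_swap|move=> x; exact: (dg (x.2, x.1))].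
Qed.

End PolynomialFunctions.
Arguments polyfun_fst {R}.
Arguments polyfun_snd {R}.

(** * The triangulation *)

Lemma near_affine_itv (R : realFieldType) (c h l r a : R) : 0 < h ->
  l < (a - c) / h -> (a - c) / h < r ->
  \forall t \near a, l < (t - c) / h /\ (t - c) / h < r.
Proof.
move=> h0 la ar.
have : a \in `]c + l * h, c + r * h[.
  rewrite ltr_pdivlMr // in la; rewrite ltr_pdivrMr // in ar.
  by rewrite in_itv /=; apply/andP; split; lra.
move=> /near_in_itvoo; apply: filterS => t; rewrite in_itv /= => /andP[t1 t2].
by rewrite ltr_pdivlMr // ltr_pdivrMr //; split; lra.
Qed.

Lemma cell_coord_itv (R : realFieldType) (a b h y : R) (M i : nat) :
  0 < h -> M%:R * h = b - a -> (i < M)%N ->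
  0 < (y - (a + i%:R * h)) / h -> (y - (a + i%:R * h)) / h < 1 -> a < y < b.
Proof.
move=> h0 Mh iM; rewrite ltr_pdivlMr // ltr_pdivrMr // mul0r mul1r => y0 y1.
have : (i.+1)%:R * h <= M%:R * h by rewrite ler_pM2r // ler_nat.
rewrite -addn1 natrD mulrDl mul1r => ihM.
have : 0 <= i%:R * h by rewrite mulr_ge0 // ltW.
by move=> ih0; apply/andP; split; lra.
Qed.

Section Triangulation.
Variables (R : realType) (G : grid R).
Hypothesis gok : grid_ok G.

Lemma hx_gt0 : 0 < hx G.
Proof. by case: gok => ab [_ [M1 _]]; rewrite divr_gt0 ?subr_gt0 ?ltr0n. Qed.

Lemma hy_gt0 : 0 < hy G.
Proof. by case: gok => _ [ab [_ M2]]; rewrite divr_gt0 ?subr_gt0 ?ltr0n. Qed.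

Lemma hx_cells : (gM1 G)%:R * hx G = gb1 G - ga1 G.
Proof. by case: gok => _ [_ [M1 _]]; rewrite mulrC divfK // pnatr_eq0 -lt0n. Qed.

Lemma hy_cells : (gM2 G)%:R * hy G = gb2 G - ga2 G.
Proof. by case: gok => _ [_ [_ M2]]; rewrite mulrC divfK // pnatr_eq0 -lt0n. Qed.

Lemma triint_near_fst i j b x : triint G i j b x ->
  \forall t \near x.1, triint G i j b (t, x.2).
Proof.
case: b => -[h1 [h2 h3]].
- by apply: filterS (near_affine_itv hx_gt0 h1 h2) => t [t1 t2].
- by apply: filterS (near_affine_itv hx_gt0 h2 h3) => t [t1 t2].
Qed.

Lemma triint_near_snd i j b x : triint G i j b x ->
  \forall t \near x.2, triint G i j b (x.1, t).
Proof.
case: b => -[h1 [h2 h3]].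
- by apply: filterS (near_affine_itv hy_gt0 h2 h3) => t [t1 t2].
- by apply: filterS (near_affine_itv hy_gt0 h1 h2) => t [t1 t2].
Qed.

Lemma triint_sub_tri i j b : triint G i j b `<=` tri G i j b.
Proof. by case: b => x -[h1 [h2 h3]]; do !split; apply: ltW. Qed.

Lemma triint_sub_Omega i j b : (i < gM1 G)%N -> (j < gM2 G)%N ->
  triint G i j b `<=` Omega G.
Proof.
move=> iM jM x.
have in1 := cell_coord_itv (y := x.1) hx_gt0 hx_cells iM.
have in2 := cell_coord_itv (y := x.2) hy_gt0 hy_cells jM.
by case: b => -[h1 [h2 h3]]; split; first [apply: in1 | apply: in2]; lra.
Qed.

Lemma measurable_triint i j b : measurable (triint G i j b).
Proof.
pose s (x : R * R) := (x.1 - (ga1 G + i%:R * hx G)) / hx G.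
pose t (x : R * R) := (x.2 - (ga2 G + j%:R * hy G)) / hy G.
have ps : polyfun s := polyfunM (polyfunD polyfun_fst (polyfun_cst _)) (polyfun_cst _).
have pt : polyfun t := polyfunM (polyfunD polyfun_snd (polyfun_cst _)) (polyfun_cst _).
have chain3 (u v : R * R -> R) : polyfun u -> polyfun v ->
    measurable ([set x | 0 < u x] `&` [set x | u x < v x] `&` [set x | v x < 1]).
  move=> pu pv; apply: measurableI; first apply: measurableI.
  - exact: (measurable_polyfun_lt (polyfun_cst 0) pu).
  - exact: measurable_polyfun_lt.
  - exact: (measurable_polyfun_lt pv (polyfun_cst 1)).
case: b; [have := chain3 _ _ ps pt|have := chain3 _ _ pt ps];
  by congr measurable; apply/seteqP; split => x /=; rewrite /triint /s /t /=; tauto.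
Qed.

Definition tri_index (k : nat) : nat * nat * bool :=
  (k %% gM1 G, k %/ gM1 G %% gM2 G, odd (k %/ gM1 G %/ gM2 G))%N.

Definition tri_enum (k : nat) : set (R * R) :=
  triint G (tri_index k).1.1 (tri_index k).1.2 (tri_index k).2.

Lemma tri_index_lt k : ((tri_index k).1.1 < gM1 G)%N /\ ((tri_index k).1.2 < gM2 G)%N.
Proof. by case: gok => _ [_ [M1 M2]]; split; apply: ltn_pmod. Qed.

Lemma tri_index_onto i j (b : bool) : (i < gM1 G)%N -> (j < gM2 G)%N ->
  exists2 k, (k < 2 * gM2 G * gM1 G)%N & tri_index k = (i, j, b).
Proof.
case: gok => _ [_ [M1 M2]] iM jM; exists ((j + b * gM2 G) * gM1 G + i)%N.
  by case: b; rewrite /= ?mul1n ?mul0n; nia.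
rewrite /tri_index modnMDl modn_small // divnMDl // divn_small // addn0.
by rewrite addnC modnMDl modn_small // divnMDl // divn_small // addn0; case: b.
Qed.

Lemma Omega_int_bigcup : Omega_int G = \bigcup_k tri_enum k.
Proof.
apply/seteqP; split => [x [i [j [b [iM [jM xT]]]]]|x [k _ xT]].
- by have [k _ ek] := tri_index_onto b iM jM; exists k => //; rewrite /tri_enum ek.
- by have [iM jM] := tri_index_lt k; exists (tri_index k).1.1, (tri_index k).1.2, (tri_index k).2.
Qed.

Lemma measurable_Omega_int : measurable (Omega_int G).
Proof.
by rewrite Omega_int_bigcup; apply: bigcupT_measurable => k; exact: measurable_triint.
Qed.

Lemma Omega_int_sub_Omega : Omega_int G `<=` Omega G.
Proof. by move=> x [i [j [b [iM [jM]]]]]; exact: triint_sub_Omega. Qed.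

Lemma Omega_setX : Omega G = `]ga1 G, gb1 G[%classic `*` `]ga2 G, gb2 G[%classic.
Proof. by apply/seteqP; split => x; rewrite /= !in_itv. Qed.

Lemma Omega_int_finite : (lam2 (Omega_int G) < +oo)%E.
Proof.
have mO : measurable (Omega G).
  by rewrite Omega_setX; apply: measurableX; exact: measurable_itv.
apply: (@le_lt_trans _ _ (lam2 (Omega G))).
  apply: le_measure; rewrite ?inE //; [exact: measurable_Omega_int|exact: Omega_int_sub_Omega].
rewrite Omega_setX /lam2 product_measure1E //= !lebesgue_measure_itv /=.
by case: gok => ab1 [ab2 _]; rewrite !lte_fin ab1 ab2 -!EFinD -EFinM ltry.
Qed.

End Triangulation.

(** * Piecewise polynomial and bounded functions *)

Lemma norm_le_itv (R : realDomainType) (a b y : R) : a < y < b -> `|y| <= `|a| + `|b|.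
Proof.
move=> /andP[ay yb]; rewrite ler_norml.
have ha : - a <= `|a| by rewrite -normrN ler_norm.
have hb := ler_norm b; have a0 := normr_ge0 a; have b0 := normr_ge0 b.
by apply/andP; split; lra.
Qed.

Lemma bounded_on_finite_union (R : realDomainType) (T : Type) (A : nat -> set T)
    (f : T -> R) m :
  (forall k, (k < m)%N -> exists M, forall x, A k x -> `|f x| <= M) ->
  exists M, forall k x, (k < m)%N -> A k x -> `|f x| <= M.
Proof.
elim: m => [|m IH] hA; first by exists 0.
have [M hM] := IH (fun k km => hA k (ltnW km)).
have [Mm hMm] := hA m (ltnSn m).
exists (Num.max M Mm) => k x; rewrite ltnS leq_eqVlt => /predU1P[-> xA|km xA].
- by rewrite le_max hMm ?orbT.
- by rewrite le_max (hM k x).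
Qed.

Definition piecewise_poly (R : realType) (G : grid R) (f : R * R -> R) : Prop :=
  forall i j b, (i < gM1 G)%N -> (j < gM2 G)%N ->
    exists2 g, polyfun g & forall x, triint G i j b x -> f x = g x.

Definition Linfty (R : realType) (G : grid R) (f : R * R -> R) : Prop :=
  measurable_fun (Omega_int G) f /\ exists M, forall x, Omega_int G x -> `|f x| <= M.

Definition LinftyV (R : realType) (G : grid R) (u : vfun R) : Prop :=
  Linfty G u.1 /\ Linfty G u.2.

Section PiecewisePolynomials.
Variables (R : realType) (G : grid R).
Hypothesis gok : grid_ok G.
Implicit Types f g : R * R -> R.

Lemma FEfun_on_triint l f i j b : FEfun G l f -> (i < gM1 G)%N -> (j < gM2 G)%N ->
  exists g0 g1 g2, [/\ polyfun g0, polyfun g1, polyfun g2 &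
    forall x, triint G i j b x -> [/\ f x = g0 x,
      is_derive x.1 (1 : R) (fun t => f (t, x.2)) (g1 x) &
      is_derive x.2 (1 : R) (fun t => f (x.1, t)) (g2 x)]].
Proof.
move=> [fP _] iM jM; have [P fE] := fP i j b iM jM.
have pP := polyfun_poly2 l P.
have [g1 pg1 d1] := polyfun_derive_fst pP; have [g2 pg2 d2] := polyfun_derive_snd pP.
exists (poly2 l P), g1, g2; split => // x xT; split.
- exact/fE/triint_sub_tri.
- apply: near_eq_is_derive (d1 x).
  by apply: filterS (triint_near_fst gok xT) => t tT; rewrite fE //; exact: triint_sub_tri.
- apply: near_eq_is_derive (d2 x).
  by apply: filterS (triint_near_snd gok xT) => t tT; rewrite fE //; exact: triint_sub_tri.
Qed.

Lemma FEfun_is_derive l f x : FEfun G l f -> Omega_int G x ->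
  is_derive x.1 (1 : R) (fun t => f (t, x.2)) (dx f x) /\
  is_derive x.2 (1 : R) (fun t => f (x.1, t)) (dy f x).
Proof.
move=> hf [i [j [b [iM [jM xT]]]]].
have [g0 [g1 [g2 [_ _ _ /(_ x xT) [_ d1 d2]]]]] := FEfun_on_triint b hf iM jM.
by rewrite /dx /dy !derive1E !derive_val.
Qed.

Lemma piecewise_poly_FEfun l f : FEfun G l f ->
  [/\ piecewise_poly G f, piecewise_poly G (dx f) & piecewise_poly G (dy f)].
Proof.
move=> hf; split => i j b iM jM;
  have [g0 [g1 [g2 [p0 p1 p2 gE]]]] := FEfun_on_triint b hf iM jM.
- by exists g0 => // x /gE[].
- by exists g1 => // x /gE[_ d1 _]; rewrite /dx derive1E derive_val.
- by exists g2 => // x /gE[_ _ d2]; rewrite /dy derive1E derive_val.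
Qed.

Lemma Omega_coord_bound x : Omega G x ->
  `|x.1| <= `|ga1 G| + `|gb1 G| + `|ga2 G| + `|gb2 G| /\
  `|x.2| <= `|ga1 G| + `|gb1 G| + `|ga2 G| + `|gb2 G|.
Proof.
move=> [/norm_le_itv x1 /norm_le_itv x2].
have := normr_ge0 (ga1 G); have := normr_ge0 (gb1 G).
have := normr_ge0 (ga2 G); have := normr_ge0 (gb2 G).
by split; lra.
Qed.

Lemma Linfty_piecewise_poly f : piecewise_poly G f -> Linfty G f.
Proof.
move=> hf; split.
  rewrite Omega_int_bigcup //; apply/measurable_fun_bigcup => [k|k].
    exact: measurable_triint.
  have [iM jM] := tri_index_lt gok k; have [g pg fE] := hf _ _ (tri_index G k).2 iM jM.
  apply: (eq_measurable_fun g); first by move=> x; rewrite inE => /fE.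
  exact: measurable_funS (measurable_polyfun pg).
have [M hM] : exists M, forall k x, (k < 2 * gM2 G * gM1 G)%N -> tri_enum G k x -> `|f x| <= M.
  apply: bounded_on_finite_union => k _.
  have [iM jM] := tri_index_lt gok k; have [g pg fE] := hf _ _ (tri_index G k).2 iM jM.
  have [M hM] := polyfun_bounded (`|ga1 G| + `|gb1 G| + `|ga2 G| + `|gb2 G|) pg.
  exists M => x xT; have [x1 x2] := Omega_coord_bound (triint_sub_Omega gok iM jM xT).
  by rewrite (fE x xT); exact: hM.
exists M => x [i [j [b [iM [jM xT]]]]].
have [k km kE] := tri_index_onto gok b iM jM.
by apply: (hM k) => //; rewrite /tri_enum kE.
Qed.

Lemma LinftyD f g : Linfty G f -> Linfty G g -> Linfty G (fun x => f x + g x).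
Proof.
move=> [mf [Mf bf]] [mg [Mg bg]]; split; first exact: measurable_funD.
by exists (Mf + Mg) => x xO; rewrite (le_trans (ler_normD _ _)) // lerD ?bf ?bg.
Qed.

Lemma LinftyM f g : Linfty G f -> Linfty G g -> Linfty G (fun x => f x * g x).
Proof.
move=> [mf [Mf bf]] [mg [Mg bg]]; split; first exact: measurable_funM.
by exists (Mf * Mg) => x xO; rewrite normrM ler_pM ?bf ?bg.
Qed.

Lemma Linfty_cst (a : R) : Linfty G (fun=> a).
Proof. by split; [exact: measurable_cst|exists `|a|]. Qed.

Lemma Linfty_lin a f b g : Linfty G f -> Linfty G g -> Linfty G (lin a f b g).
Proof. by move=> hf hg; apply: LinftyD; apply: LinftyM => //; exact: Linfty_cst. Qed.

Lemma LinftyV_lin a u b v : LinftyV G u -> LinftyV G v -> LinftyV G (vlin a u b v).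
Proof. by move=> [u1 u2] [v1 v2]; split; exact: Linfty_lin. Qed.

Lemma Linfty_expR f : Linfty G f -> Linfty G (fun x => expR (f x)).
Proof.
move=> [mf [M bf]]; split; first exact: measurableT_comp (@measurable_expR R) mf.
exists (expR M) => x xO; rewrite gtr0_norm ?expR_gt0 // ler_expR.
exact: le_trans (ler_norm _) (bf x xO).
Qed.

Lemma integrable_Linfty f : Linfty G f -> (@lam2 R).-integrable (Omega_int G) (EFin \o f).
Proof.
move=> [mf [M bf]]; apply: measurable_bounded_integrable => //.
- exact: measurable_Omega_int.
- exact: Omega_int_finite.
- exists M; split; first by rewrite num_real.
  by move=> y My x xO; apply: le_trans (bf x xO) _; exact: ltW.
Qed.

Lemma LinftyV_FEfun_grad l f : FEfun G l f -> LinftyV G (grad f).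
Proof.
by case/piecewise_poly_FEfun => _ fx fy; split; exact: Linfty_piecewise_poly.
Qed.

Lemma LinftyV_proj_vel l1 l2 u : proj_vel G l1 l2 u -> LinftyV G u.
Proof.
move=> [w [phi [[w1 [w2 _]] [[hphi _] ->]]]].
have [gx gy] := LinftyV_FEfun_grad hphi.
have [pw1 _ _] := piecewise_poly_FEfun w1; have [pw2 _ _] := piecewise_poly_FEfun w2.
by split; apply: Linfty_lin => //; exact: Linfty_piecewise_poly.
Qed.

Lemma Linfty_FEfun l f : FEfun G l f -> Linfty G f.
Proof. by case/piecewise_poly_FEfun => pf _ _; exact: Linfty_piecewise_poly. Qed.

Lemma grad_FEfunD l l' f g x : FEfun G l f -> FEfun G l' g -> Omega_int G x ->
  dx (fun y => f y + g y) x = dx f x + dx g x /\ dy (fun y => f y + g y) x = dy f x + dy g x.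
Proof.
move=> hf hg xO; have [df1 df2] := FEfun_is_derive hf xO.
have [dg1 dg2] := FEfun_is_derive hg xO.
by rewrite /dx /dy !derive1E; split; apply: deriveD; exact: ex_derive.
Qed.

Lemma LinftyV_Xh l u : Xh G l u -> LinftyV G u.
Proof. by case=> h1 [h2 _]; split; [exact: Linfty_FEfun h1|exact: Linfty_FEfun h2]. Qed.

End PiecewisePolynomials.

(** * L^2 inner products *)

Section InnerProducts.
Variables (R : realType) (G : grid R).
Hypothesis gok : grid_ok G.
Implicit Types (f g h : R * R -> R) (u v w : vfun R).

Lemma ip_sym f g : ip G f g = ip G g f.
Proof. by rewrite /ip; congr Rintegral; apply: funext => x; rewrite mulrC. Qed.

Lemma ip_ge0 f : 0 <= ip G f f.
Proof. by apply: Rintegral_ge0 => x _; rewrite -expr2 sqr_ge0. Qed.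

Lemma ipZl a f h : Linfty G f -> Linfty G h -> ip G (fun x => a * f x) h = a * ip G f h.
Proof.
move=> hf hh; rewrite /ip -RintegralZl; last 2 first.
- exact: measurable_Omega_int.
- exact/integrable_Linfty/LinftyM.
by congr Rintegral; apply: funext => x; rewrite mulrA.
Qed.

Lemma ip_linl a f b g h : Linfty G f -> Linfty G g -> Linfty G h ->
  ip G (lin a f b g) h = a * ip G f h + b * ip G g h.
Proof.
move=> hf hg hh; rewrite -!ipZl // /ip -RintegralD; last 3 first.
- exact: measurable_Omega_int.
- by apply/integrable_Linfty/LinftyM => //; apply: LinftyM => //; exact: Linfty_cst.
- by apply/integrable_Linfty/LinftyM => //; apply: LinftyM => //; exact: Linfty_cst.
by congr Rintegral; apply: funext => x; rewrite /lin mulrDl.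
Qed.

Lemma ipv_sym u v : ipv G u v = ipv G v u.
Proof. by rewrite /ipv ip_sym [ip G u.2 _]ip_sym. Qed.

Lemma ipv_ge0 u : 0 <= ipv G u u.
Proof. by rewrite addr_ge0 ?ip_ge0. Qed.

Lemma ipv_linl a u b v w : LinftyV G u -> LinftyV G v -> LinftyV G w ->
  ipv G (vlin a u b v) w = a * ipv G u w + b * ipv G v w.
Proof. by move=> [u1 u2] [v1 v2] [w1 w2]; rewrite /ipv !ip_linl //; ring. Qed.

Lemma ipv_linr a u b v w : LinftyV G u -> LinftyV G v -> LinftyV G w ->
  ipv G w (vlin a u b v) = a * ipv G w u + b * ipv G w v.
Proof. by move=> hu hv hw; rewrite ipv_sym ipv_linl // ![ipv G _ w]ipv_sym. Qed.

Lemma eq_ipv u u' v v' :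
  {in Omega_int G, u.1 =1 u'.1} -> {in Omega_int G, u.2 =1 u'.2} ->
  {in Omega_int G, v.1 =1 v'.1} -> {in Omega_int G, v.2 =1 v'.2} ->
  ipv G u v = ipv G u' v'.
Proof.
move=> e1 e2 e3 e4; rewrite /ipv /ip.
by congr (_ + _); apply: eq_Rintegral => x xO; rewrite ?e1 ?e2 ?e3 ?e4.
Qed.

Lemma ipv_weight_swap N (w : 'I_N -> R * R -> R) u v :
  ipv G (fun x => \sum_(i < N) w i x * u.1 x, fun x => \sum_(i < N) w i x * u.2 x) v =
  ipv G (fun x => \sum_(i < N) w i x * v.1 x, fun x => \sum_(i < N) w i x * v.2 x) u.
Proof.
rewrite /ipv /ip; congr (_ + _); congr Rintegral; apply: funext => x /=;
  by rewrite !big_distrl; apply: eq_bigr => i _; exact: mulrAC.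
Qed.

End InnerProducts.

(** * Positive integrals *)

Section PositiveIntegrals.
Context d (T : measurableType d) (R : realType) (mu : {measure set T -> \bar R}).

(* The library version assumes measurability, which is not available for the merely
   continuous concentrations c^n. *)
Lemma ge0_le_integral_nonmeasurable (D : set T) (f g : T -> \bar R) :
  (forall x, D x -> (0 <= f x)%E) -> (forall x, D x -> (f x <= g x)%E) ->
  (\int[mu]_(x in D) f x <= \int[mu]_(x in D) g x)%E.
Proof.
move=> f0 fg; have g0 x : D x -> (0 <= g x)%E by move=> xD; exact: le_trans (f0 x xD) (fg x xD).
rewrite (ge0_integralE _ f0) (ge0_integralE _ g0).
apply: ereal_sup_le => _ [h hf <-]; exists h => //= x.
apply: le_trans (hf x) _; rewrite /patch; case: ifP => // /[!inE] xD.
exact: fg.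
Qed.

Lemma Rintegral_gt0 (D S : set T) (f : T -> R) (eps M : R) :
  measurable D -> measurable S -> S `<=` D -> (0 < mu S)%E -> (mu D < +oo)%E ->
  0 < eps -> (forall x, S x -> eps <= f x) -> (forall x, D x -> 0 <= f x <= M) ->
  0 < Rintegral mu D f.
Proof.
move=> mD mS SD S0 Dfin e0 fS fD.
have M0 : 0 <= M.
  have [x Sx] : S !=set0.
    by apply/set0P; apply: contraTneq S0 => ->; rewrite measure0 ltxx.
  by case/andP: (fD x (SD x Sx)); exact: le_trans.
have lo : (eps%:E * mu S <= \int[mu]_(x in D) (f x)%:E)%E.
  have -> : (eps%:E * mu S = \int[mu]_(x in D) (eps%:E * (\1_S x)%:E))%E.
    rewrite ge0_integralZl_EFin ?integral_indic ?setIidl //.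
    - exact/measurable_EFinP/measurable_indic.
    - exact: ltW.
  apply: ge0_le_integral_nonmeasurable => x xD.
    by rewrite -EFinM lee_fin mulr_ge0 ?(ltW e0) // indicE.
  rewrite -EFinM lee_fin /indic; have [xS|xS] := boolP (x \in S).
    by rewrite mulr1; apply: fS; rewrite inE in xS.
  by rewrite mulr0; case/andP: (fD x xD).
have up : (\int[mu]_(x in D) (f x)%:E <= M%:E * mu D)%E.
  rewrite -integral_cst //; apply: ge0_le_integral_nonmeasurable => x /fD /andP[f0 fM];
    by rewrite lee_fin.
have pos : (0 < eps%:E * mu S)%E by rewrite mule_gt0 // lte_fin.
have fin : (M%:E * mu D < +oo)%E by rewrite lte_mul_pinfty ?lee_fin.
rewrite /Rintegral; move: lo up.
case: (\int[mu]_(x in D) (f x)%:E)%E => [r| |] /= lo up.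
- by rewrite -lte_fin; exact: lt_le_trans pos lo.
- by move: (le_lt_trans up fin); rewrite ltxx.
- by move: (lt_le_trans pos lo); rewrite ltNge leNye.
Qed.

End PositiveIntegrals.

Definition square (R : realType) (x : R * R) (r : R) : set (R * R) :=
  [set y | `|x.1 - y.1| < r /\ `|x.2 - y.2| < r].

Section Squares.
Variable R : realType.
Implicit Types (x : R * R) (r : R).

Lemma square_le x r r' : r <= r' -> square x r `<=` square x r'.
Proof. by move=> rr' y [y1 y2]; split; apply: lt_le_trans rr'. Qed.

Lemma square_setX x r :
  square x r = `]x.1 - r, x.1 + r[%classic `*` `]x.2 - r, x.2 + r[%classic.
Proof.
apply/seteqP; split => y; rewrite /square /= !in_itv /= !ltr_norml.
- by move=> [/andP[a b] /andP[c e]]; split; apply/andP; split; lra.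
- by move=> [/andP[a b] /andP[c e]]; split; apply/andP; split; lra.
Qed.

Lemma measurable_square x r : measurable (square x r).
Proof. by rewrite square_setX; apply: measurableX; exact: measurable_itv. Qed.

Lemma lam2_square_gt0 x r : 0 < r -> (0 < (@lam2 R) (square x r))%E.
Proof.
move=> r0; rewrite square_setX /lam2 product_measure1E //= !lebesgue_measure_itv /=.
have l1 : x.1 - r < x.1 + r by lra.
have l2 : x.2 - r < x.2 + r by lra.
by rewrite !lte_fin l1 l2 -!EFinD -EFinM lte_fin mulr_gt0 //; lra.
Qed.

Lemma continuous_within_lb (A : set (R * R)) (f : R * R -> R) x0 :
  {within A, continuous f} -> A x0 -> 0 < f x0 ->
  exists2 r, 0 < r & forall y, A y -> square x0 r y -> f x0 / 2 < f y.
Proof.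
move=> fc Ax0 f0.
have : f @ within A (nbhs x0) --> f x0.
  rewrite (nbhs_subspace_in Ax0); move: fc; rewrite continuous_subspace_in => fc.
  by apply: fc; rewrite inE.
move/cvgrPdist_lt => /(_ (f x0 / 2)); rewrite divr_gt0 // => /(_ isT).
rewrite /within /= => /nbhs_ballP [r r0 fr].
exists r => // y Ay [y1 y2].
have : `|f x0 - f y| < f x0 / 2 by apply: fr; rewrite // ball_normE.
by rewrite ltr_norml => /andP[a b]; lra.
Qed.

End Squares.

Section PositiveIntegralsOnOmega.
Variables (R : realType) (G : grid R).
Hypothesis gok : grid_ok G.
Implicit Types f : R * R -> R.

Lemma Omega_sub_Omegac : Omega G `<=` Omegac G.
Proof. by move=> x [/andP[a b] /andP[c e]]; split; apply/andP; split; apply: ltW. Qed.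

Lemma continuous_Omegac_bounded f : {within Omegac G, continuous f} ->
  exists M, forall x, Omegac G x -> `|f x| <= M.
Proof.
move=> fc; have cO : compact (Omegac G).
  rewrite (_ : Omegac G = `[ga1 G, gb1 G]%classic `*` `[ga2 G, gb2 G]%classic).
    by apply: compact_setX; exact: segment_compact.
  by apply/seteqP; split => x; rewrite /= !in_itv.
have [M [_ hM]] := compact_bounded (continuous_compact fc cO).
exists (`|M| + 1) => x xO; apply: (hM (`|M| + 1)); last by exists x.
by rewrite (le_lt_trans (ler_norm M)) // ltrDl.
Qed.

(* The centre has local coordinates (2/3, 1/3) in cell (0, 0), inside its lower triangle. *)
Lemma Omega_int_square : exists x0, exists2 r0, 0 < r0 &
  forall r, r <= r0 -> square x0 r `<=` Omega_int G.
Proof.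
have hx0 := hx_gt0 gok; have hy0 := hy_gt0 gok.
exists (ga1 G + hx G * 2 / 3, ga2 G + hy G / 3), (Num.min (hx G / 6) (hy G / 6)).
  by rewrite lt_min divr_gt0 // divr_gt0.
move=> r rr0 y [+ +]; rewrite !ltr_norml => /andP[a1 a2] /andP[b1 b2] /=.
rewrite /= in a1 a2 b1 b2.
have rx : r <= hx G / 6 by rewrite (le_trans rr0) // ge_min lexx.
have ry : r <= hy G / 6 by rewrite (le_trans rr0) // ge_min lexx orbT.
have [_ [_ [M1 M2]]] := gok.
exists 0%N, 0%N, false; do 2 split => //; rewrite /triint /= !mul0r !addr0.
split; [|split].
- by rewrite divr_gt0 //; lra.
- apply: (@lt_trans _ _ (1 / 2)).
    by rewrite ltr_pdivrMr //; lra.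
  by rewrite ltr_pdivlMr //; lra.
- by rewrite ltr_pdivrMr //; lra.
Qed.

Lemma ip_onef_gt0_continuous f : {within Omegac G, continuous f} ->
  (forall x, Omega G x -> 0 < f x) -> 0 < ip G f onef.
Proof.
move=> fc fpos; have [x0 [r0 r0_gt0 sq]] := Omega_int_square.
have x0O : Omega_int G x0 by apply: (sq r0 (lexx _)); split; rewrite subrr normr0.
have Ox0 := Omega_int_sub_Omega gok x0O.
have [e e0 lb] := continuous_within_lb fc (Omega_sub_Omegac Ox0) (fpos _ Ox0).
have [M bM] := continuous_Omegac_bounded fc.
have Of y : Omega_int G y -> Omegac G y.
  by move=> /(Omega_int_sub_Omega gok) /Omega_sub_Omegac.
pose r := Num.min e r0.
rewrite /ip; apply: (@Rintegral_gt0 _ _ _ (@lam2 R) _ (square x0 r) _ (f x0 / 2) M).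
- exact: measurable_Omega_int.
- exact: measurable_square.
- by apply: sq; rewrite ge_min lexx orbT.
- by apply: lam2_square_gt0; rewrite lt_min e0.
- exact: Omega_int_finite.
- by rewrite divr_gt0 // fpos.
- move=> y ysq; rewrite /onef mulr1; apply/ltW/lb.
    by apply/Of/(sq r); rewrite ?ge_min ?lexx ?orbT.
  by apply: square_le ysq; rewrite ge_min lexx.
- move=> y yO; have Oy := Omega_int_sub_Omega gok yO.
  rewrite /onef mulr1 ltW ?fpos //=.
  exact: le_trans (ler_norm _) (bM y (Of y yO)).
Qed.

Lemma ip_onef_gt0_lb f eps : Linfty G f -> 0 < eps ->
  (forall x, Omega_int G x -> eps <= f x) -> 0 < ip G f onef.
Proof.
move=> [_ [M bM]] e0 fe; have [x0 [r0 r0_gt0 sq]] := Omega_int_square.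
rewrite /ip; apply: (@Rintegral_gt0 _ _ _ (@lam2 R) _ (square x0 r0) _ eps M).
- exact: measurable_Omega_int.
- exact: measurable_square.
- exact: sq.
- exact: lam2_square_gt0.
- exact: Omega_int_finite.
- exact: e0.
- by move=> y /(sq r0 (lexx _)) yO; rewrite /onef mulr1 fe.
- move=> y yO; rewrite /onef mulr1 (le_trans (ltW e0) (fe y yO)) /=.
  exact: le_trans (ler_norm _) (bM y yO).
Qed.

Lemma ip_expR_gt0 f : Linfty G f -> 0 < ip G (fun x => expR (f x)) onef.
Proof.
move=> hf; have [_ [M bM]] := hf.
apply: (ip_onef_gt0_lb (Linfty_expR hf) (expR_gt0 (- M))) => x xO.
by rewrite ler_expR; move: (bM x xO); rewrite ler_norml => /andP[].
Qed.

Lemma ip_rescale f m : Linfty G f -> ip G f onef != 0 ->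
  ip G (fun x => m / ip G f onef * f x) onef = m.
Proof. by move=> hf f0; rewrite ipZl ?divfK //; exact: (Linfty_cst _ 1). Qed.

End PositiveIntegralsOnOmega.

(** * The discrete energy estimate *)

Lemma bdf2_sqr_step (R : realFieldType) (a b c : R) :
  (1 / 2) * (a ^+ 2 + (2 * a - b) ^+ 2) - (1 / 2) * (b ^+ 2 + (2 * b - c) ^+ 2)
  <= a * (3 * a - 4 * b + c).
Proof.
rewrite -subr_ge0.
have -> : a * (3 * a - 4 * b + c) - ((1 / 2) * (a ^+ 2 + (2 * a - b) ^+ 2)
    - (1 / 2) * (b ^+ 2 + (2 * b - c) ^+ 2)) = (a - 2 * b + c) ^+ 2 / 2 by field.
by rewrite divr_ge0 ?sqr_ge0.
Qed.

Ltac LinftyV_side := by repeat apply: LinftyV_lin.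
Ltac ipv_expand := repeat first
  [ rewrite ipv_linl; try LinftyV_side | rewrite ipv_linr; try LinftyV_side ].

Section BDF2Energy.
Variables (R : realType) (G : grid R).
Hypothesis gok : grid_ok G.
Implicit Types u v w : vfun R.

Lemma ipv_bdf2 u v w : LinftyV G u -> LinftyV G v -> LinftyV G w ->
  ipv G u u + ipv G (vlin 2 u (-1) v) (vlin 2 u (-1) v)
  - ipv G v v - ipv G (vlin 2 v (-1) w) (vlin 2 v (-1) w)
  = 2 * ipv G (vlin 3 u 1 (vlin (-4) v 1 w)) u
    - ipv G (vlin 1 u 1 (vlin (-2) v 1 w)) (vlin 1 u 1 (vlin (-2) v 1 w)).
Proof.
move=> hu hv hw; ipv_expand.
rewrite [ipv G v u]ipv_sym [ipv G w u]ipv_sym [ipv G w v]ipv_sym; ring.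
Qed.

Lemma ipv_projection_step (ut v w g : vfun R) (dt : R) : dt != 0 ->
  LinftyV G ut -> LinftyV G v -> LinftyV G w -> LinftyV G g ->
  ipv G g g = 3 / (2 * dt) * ipv G ut g -> ipv G v g = 0 -> ipv G w g = 0 ->
  ipv G (vlin 3 (vlin 1 ut (- (2 * dt / 3)) g) 1 (vlin (-4) v 1 w))
        (vlin 1 ut (- (2 * dt / 3)) g)
  = 2 * dt * ipv G (vlin (3 / (2 * dt)) ut (1 / (2 * dt)) (vlin (-4) v 1 w)) ut
    - 4 * dt ^+ 2 / 3 * ipv G g g.
Proof.
move=> dtN hut hv hw hg gg vg wg.
have ug : ipv G ut g = 2 * dt / 3 * ipv G g g by rewrite gg; field.
by ipv_expand; rewrite [ipv G g ut]ipv_sym vg wg ug; field.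
Qed.

Lemma ipv_pressure_step (ut g q : vfun R) (dt : R) : dt != 0 ->
  LinftyV G ut -> LinftyV G g -> LinftyV G q ->
  ipv G g q = 3 / (2 * dt) * ipv G ut q ->
  dt ^+ 2 / 3 * (ipv G (vlin 1 g 1 q) (vlin 1 g 1 q) - ipv G q q)
  = dt ^+ 2 / 3 * ipv G g g + dt * ipv G q ut.
Proof.
move=> dtN hut hg hq gq.
by ipv_expand; rewrite [ipv G q g]ipv_sym [ipv G q ut]ipv_sym gq; field.
Qed.

Lemma Eh_bdf2_step l l' (ut v w : vfun R) (psi pn p1 : R * R -> R) (dt r1 rn rm : R) :
  0 < dt -> LinftyV G ut -> LinftyV G v -> LinftyV G w -> FEfun G l psi -> FEfun G l' pn ->
  p1 = (fun x => psi x + pn x) ->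
  ipg G psi psi = 3 / (2 * dt) * ipv G ut (grad psi) ->
  ipg G psi pn = 3 / (2 * dt) * ipv G ut (grad pn) ->
  ipv G v (grad psi) = 0 -> ipv G w (grad psi) = 0 ->
  Eh G dt (vlin 1 ut (- (2 * dt / 3)) (grad psi)) v p1 r1 rn - Eh G dt v w pn rn rm
  <= dt * (ipv G (vlin (3 / (2 * dt)) ut (1 / (2 * dt)) (vlin (-4) v 1 w)) ut
           + ipv G (grad pn) ut)
     + r1 * (3 * r1 - 4 * rn + rm).
Proof.
move=> dt0 hut hv hw hpsi hpn p1E gg gq vg wg.
have dtN : dt != 0 by rewrite gt_eqF.
have hg := LinftyV_FEfun_grad gok hpsi; have hq := LinftyV_FEfun_grad gok hpn.
have {}p1E : ipg G p1 p1
    = ipv G (vlin 1 (grad psi) 1 (grad pn)) (vlin 1 (grad psi) 1 (grad pn)).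
  rewrite p1E; apply: eq_ipv => x /[!inE] /(grad_FEfunD gok hpsi hpn) [e1 e2];
  by rewrite /= /lin ?e1 ?e2 !mul1r.
have {gg vg wg}kin := ipv_projection_step dtN hut hv hw hg gg vg wg.
have {gq}pres := ipv_pressure_step dtN hut hg hq gq.
rewrite /Eh {}p1E /ipg.
(* Abstracting the gradients stops lra from comparing its atoms by unfolding derivatives. *)
move: (grad psi) (grad pn) hg hq kin pres => g q hg hq kin pres.
have hu1 : LinftyV G (vlin 1 ut (- (2 * dt / 3)) g) by LinftyV_side.
have bdf := ipv_bdf2 hu1 hv hw.
have disp := ipv_ge0 G (vlin 1 (vlin 1 ut (- (2 * dt / 3)) g) 1 (vlin (-2) v 1 w)).
have gg0 : 0 <= dt ^+ 2 / 3 * ipv G g g by rewrite mulr_ge0 ?ipv_ge0 // divr_ge0 ?sqr_ge0.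
have sav := bdf2_sqr_step r1 rn rm.
lra.
Qed.

End BDF2Energy.

Lemma sav_product_step (R : realFieldType) (dt S r1 F Q : R) : dt != 0 -> S != 0 ->
  F / (2 * dt) = (2 * S)^-1 * Q -> r1 * F = dt * (r1 / S) * Q.
Proof. by move=> dtN SN e; rewrite -[F](@divfK _ (2 * dt)) ?e; [field|rewrite mulf_neq0]. Qed.

Lemma sav_energy_balance (R : realFieldType) (dt xi E X Y Cv Vis K D Co Pe Re : R) :
  0 < dt ->
  E <= dt * (X + Y) + dt * xi * (- (Co / Pe) * xi * D + Co * K + Cv) ->
  X + xi * Cv + Re^-1 * Vis + Y = - Co * xi * K ->
  E / dt <= - Re^-1 * Vis - xi ^+ 2 * (Co / Pe) * D.
Proof.
by move=> dt0 hE /(congr1 ( *%R dt)) hX; rewrite ler_pdivrMr //; lra.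
Qed.

Unset Implicit Arguments. Set Strict Implicit. Set Printing Implicit Defensive.

Theorem mainTheorem1 (R : realType) (G : grid R) (l1 l2 l3 N : nat)
  (z : 'I_N -> int) (W : 'M[R]_N)
  (Re Co Pe lambda lambda1 k mu0 muinf B dt : R) (n : nat)
  (sig c : nat -> 'I_N -> R * R -> R) (V : nat -> R * R -> R)
  (u : nat -> vfun R) (p : nat -> R * R -> R) (r : nat -> R)
  (mu : nat -> R * R -> R)
  (cbar : 'I_N -> R * R -> R) (Vb : R * R -> R) (ut : vfun R)
  (psi : R * R -> R) (xi : R) :
  (* setting *)
  grid_ok G -> 0 < meshsize G < 1 -> inf_sup G l1 l2 ->
  posdef W -> (forall i j, 0 <= W i j) ->
  0 < Re -> 0 < Co -> 0 < Pe -> 0 < lambda -> 0 < lambda1 -> 0 < k ->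
  0 < muinf -> muinf < mu0 -> 0 < B -> 0 < dt ->
  (1 <= n)%N ->
  (* data at steps n and n-1 *)
  (forall i, Qh G l3 (sig n i) /\ Qh G l3 (sig n.-1 i)) ->
  (forall i, {within Omegac G, continuous (c n i)}) ->
  Mh G l2 (p n) ->
  proj_vel G l1 l2 (u n) -> proj_vel G l1 l2 (u n.-1) ->
  (forall q, Mh G l2 q -> ipv G (u n) (grad q) = 0 /\ ipv G (u n.-1) (grad q) = 0) ->
  let ustar := vlin 2 (u n) (-1) (u n.-1) in
  let sstar := fun i => lin 2 (sig n i) (-1) (sig n.-1 i) in
  let cstar := fun i => lin 2 (c n i) (-1) (c n.-1 i) in
  let Vstar := lin 2 (V n) (-1) (V n.-1) in
  let mustar := lin 2 (mu n) (-1) (mu n.-1) in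
  (* (a) *)
  (forall i, Qh G l3 (sig n.+1 i) /\
     forall eta, Qh G l3 eta ->
       eq_a G Pe dt z W (sig n.+1) (sig n) (sig n.-1) sstar cstar Vstar ustar i eta) ->
  (* (b) *)
  (forall i, cbar i = fun x => expR (sig n.+1 i x)) ->
  (forall i, c n.+1 i = fun x => ip G (c n i) onef / ip G (cbar i) onef * cbar i x) ->
  (* (c) *)
  Sh G l3 Vb ->
  (forall phi, Qh G l3 phi ->
     lambda * ipg G Vb phi = \sum_(i < N) ip G (fun x => (z i)%:~R * c n.+1 i x) phi) ->
  (* (e) *)
  Xh G l1 ut ->
  (forall v, Xh G l1 v -> eq_e G Re Co dt xi z ut (u n) (u n.-1) ustar mustar (p n) Vb (c n.+1) v) ->
  (* (f) *)
  xi = r n.+1 / Num.sqrt (Espnp G lambda Co W (c n.+1) Vb + B) ->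
  V n.+1 = (fun x => xi * Vb x) ->
  eq_f G Co Pe dt B xi (r n.+1) (r n) (r n.-1) z W (c n.+1) Vb lambda ut ustar ->
  (* (g) *)
  Mh G l2 psi ->
  (forall q, Mh G l2 q -> ipg G psi q = 3 / (2 * dt) * ipv G ut (grad q)) ->
  u n.+1 = vlin 1 ut (- (2 * dt / 3)) (grad psi) ->
  p n.+1 = (fun x => psi x + p n x) ->
  (* (h) *)
  mu n.+1 = carreau mu0 muinf lambda1 k (u n.+1) ->
  (* assumption bar E + B > 0 *)
  0 < Espnp G lambda Co W (c n.+1) Vb + B ->
  (* (1) positivity *)
  ((forall i x, Omega G x -> 0 < c n i x) -> forall i x, Omega G x -> 0 < c n.+1 i x)
  (* (2) mass conservation *)
  /\ (forall i, ip G (c n.+1 i) onef = ip G (c n i) onef)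
  (* (3) energy dissipation *)
  /\ (Eh G dt (u n.+1) (u n) (p n.+1) (r n.+1) (r n)
        - Eh G dt (u n) (u n.-1) (p n) (r n) (r n.-1)) / dt
     <= - Re^-1 * visc G mustar ut ut
        - xi ^+ 2 * (Co / Pe) * \sum_(i < N) dissip G z W (c n.+1) (Vb) i.

Proof.
move=> gok _ _ _ _ _ _ _ _ _ _ _ _ _ dt0 _ _ hcn hpn hun hunm horth ustar sstar cstar Vstar mustar.
move=> hsig hcb hc _ _ hut heqe hxi _ heqf hpsi hg hun1 hpn1 _ hEB.
have hsig1 i : Linfty G (sig n.+1 i) := Linfty_FEfun gok (hsig i).1.
have cbar_gt0 i : 0 < ip G (cbar i) onef by rewrite (hcb i); exact: ip_expR_gt0.
have mass i : ip G (c n.+1 i) onef = ip G (c n i) onef.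
  by rewrite (hc i) ip_rescale ?gt_eqF // (hcb i); exact: Linfty_expR.
split; [|split] => //.
  move=> cpos i x _; rewrite (hc i) mulr_gt0 ?divr_gt0 ?cbar_gt0 //.
    apply: (ip_onef_gt0_continuous gok); [exact: hcn|exact: cpos].
  by rewrite (hcb i) expR_gt0.
have [hpsiFE _] := hpsi; have [hpnFE _] := hpn; have [ug1 ug2] := horth psi hpsi.
have := Eh_bdf2_step gok (r n.+1) (r n) (r n.-1) dt0 (LinftyV_Xh gok hut)
  (LinftyV_proj_vel gok hun) (LinftyV_proj_vel gok hunm) hpsiFE hpnFE hpn1
  (hg psi hpsi) (hg (p n) hpn) ug1 ug2.
rewrite -hun1 => Estep.
have := heqe ut hut; rewrite /eq_e.
rewrite (ipv_weight_swap G (fun i x => (z i)%:~R * c n.+1 i x) (grad Vb) ut) /= => Eut.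
have SN : Num.sqrt (Espnp G lambda Co W (c n.+1) Vb + B) != 0 by rewrite gt_eqF ?sqrtr_gt0.
have := sav_product_step (r n.+1) (lt0r_neq0 dt0) SN heqf; rewrite -hxi => sav.
rewrite sav in Estep.
exact: sav_energy_balance dt0 Estep Eut.
Qed.
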